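(* Let \(k\ge0\) and \(\lambda=(\lambda_1\ge\dots\ge\lambda_k\ge0)\). Then \[ \Sigma^{(k)}_\lambda=\bigsqcup_{J\succeq_k\lambda}\Sigma^{(k),\circ}_J, \] a disjoint union over strictly increasing sequences \(J\) of length at least \(k\) that \(k\)-dominate \(\lambda\).
   Context: \(\mathcal H\) is a separable infinite-dimensional complex Hilbert space with a fixed flag of closed subspaces \(\mathcal H=W_0\supset W_1\supset\cdots\), \(\mathrm{codim}_{\mathbb C}W_j=j\), \(\bigcap_jW_j=0\). \(\mathrm{Fred}_k\) denotes the bounded Fredholm operators of index \(k\). \(\Sigma^{(k)}_\lambda=\{T\in\mathrm{Fred}_k:\dim(\ker T\cap W_{\lambda_i+k-i})\ge i,\ i=1,\dots,k\}\). For \(J=(j_0<\dots<j_{r-1})\) of non-negative integers, an \(r\)-dimensional subspace \(V\) has exact type \(J\) if \(\dim(V\cap W_{j_q})=r-q\) and \(\dim(V\cap W_{j_q+1})=r-q-1\) for \(q=0,\dots,r-1\); \(\Sigma^{(k),\circ}_J=\{T\in\mathrm{Fred}_k:\ker T\text{ has exact type }J\}\). For \(J\) of length \(r\ge k\), \(J\succeq_k\lambda\) means \(j_{r-i}\ge\lambda_i+k-i\) for \(i=1,\dots,k\). *)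

From mathcomp Require Import all_boot all_order all_algebra.
From mathcomp Require Import complex.
From mathcomp Require Import all_classical all_reals all_analysis.
Set Implicit Arguments.
Unset Strict Implicit.
Unset Printing Implicit Defensive.
Import Order.TTheory GRing.Theory Num.Theory.
Import numFieldNormedType.Exports.
Local Open Scope classical_set_scope.
Local Open Scope ring_scope.
Local Open Scope complex_scope.

Section FredholmDefs.
Context (R : realType) (H : completeNormedModType R[i]).

Definition lcomb (n : nat) (c : 'I_n -> R[i]) (v : 'I_n -> H) : H :=
  \sum_(i < n) c i *: v i.

Definition lin_indep (n : nat) (v : 'I_n -> H) : Prop :=
  forall c : 'I_n -> R[i], lcomb c v = 0 -> forall i, c i = 0.

Definition is_subspace (V : set H) : Prop :=
  V 0 /\ (forall x y, V x -> V y -> V (x + y)) /\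
  (forall (a : R[i]) x, V x -> V (a *: x)).

Definition dim_ge (V : set H) (n : nat) : Prop :=
  exists v : 'I_n -> H, lin_indep v /\ forall i, V (v i).

Definition dim_eq (V : set H) (n : nat) : Prop :=
  is_subspace V /\
  exists v : 'I_n -> H, [/\ lin_indep v, (forall i, V (v i)) &
                            (forall x, V x -> exists c, x = lcomb c v)].

(* W is a subspace of codimension exactly n : H = W (+) span(v_1..v_n) *)
Definition codim_eq (W : set H) (n : nat) : Prop :=
  is_subspace W /\
  exists v : 'I_n -> H,
    (forall c, W (lcomb c v) -> forall i, c i = 0) /\
    (forall x, exists c, W (x - lcomb c v)).

(* H is a separable, infinite-dimensional complex Hilbert space:
   its norm comes from an inner product, it is complete (by its type),
   it has a countable dense subset, and it is infinite-dimensional. *)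
Definition sep_inf_hilbert : Prop :=
  (exists ip : H -> H -> R[i],
     [/\ (forall (a : R[i]) x y z, ip (a *: x + y) z = a * ip x z + ip y z),
         (forall x y, ip y x = (ip x y)^*) &
         (forall x, ip x x = `|x| ^+ 2)]) /\
  (exists u : nat -> H, closure (range u) = setT) /\
  (forall n, exists v : 'I_n -> H, lin_indep v).

Definition is_flag (W : nat -> set H) : Prop :=
  [/\ W 0%N = setT,
      (forall j, closed (W j) /\ codim_eq (W j) j),
      (forall j, W j.+1 `<=` W j) &
      \bigcap_j W j = [set 0]].

Definition ker (T : H -> H) : set H := [set x | T x = 0].

Definition bounded_linear (T : H -> H) : Prop :=
  (forall (a : R[i]) x y, T (a *: x + y) = a *: T x + T y) /\ continuous T.

Definition Fred (k : int) (T : H -> H) : Prop :=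
  bounded_linear T /\
  exists m n : nat, [/\ dim_eq (ker T) m, closed (range T),
                        codim_eq (range T) n & k = m%:Z - n%:Z].

(* lambda is given as the list [:: lambda_1; ...; lambda_k] *)
Definition lam_at (lam : seq nat) (i : nat) : nat := nth 0%N lam i.-1.

Definition Sigma (W : nat -> set H) (k : nat) (lam : seq nat) (T : H -> H) : Prop :=
  Fred k%:Z T /\
  forall i : nat, (0 < i <= k)%N ->
    dim_ge (ker T `&` W (lam_at lam i + k - i)%N) i.

Definition exact_type (W : nat -> set H) (V : set H) (J : seq nat) : Prop :=
  dim_eq V (size J) /\
  forall q : nat, (q < size J)%N ->
    dim_eq (V `&` W (nth 0%N J q)) (size J - q)%N /\
    dim_eq (V `&` W (nth 0%N J q).+1) (size J - q - 1)%N.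

Definition SigmaO (W : nat -> set H) (k : nat) (J : seq nat) (T : H -> H) : Prop :=
  Fred k%:Z T /\ exact_type W (ker T) J.

End FredholmDefs.

Definition kdom (k : nat) (J lam : seq nat) : Prop :=
  (k <= size J)%N /\
  forall i : nat, (0 < i <= k)%N ->
    (lam_at lam i + k - i <= nth 0%N J (size J - i))%N.

Definition union_index (k : nat) (lam J : seq nat) : Prop :=
  sorted ltn J /\ kdom k J lam.

(** The kernel [V] of [T] is finite dimensional and the flag cuts out a
    function [d a = dim (V ∩ W_a)] with [d 0 = dim V], which is
    nonincreasing, drops by at most one per step (since [W_(a+1)] has
    codimension one in [W_a]) and vanishes eventually (since the flag has
    trivial intersection).  The positions [j_0 < ... < j_(r-1)] of its drops
    form the unique [J] for which [V] has exact type [J], and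
    [dim (V ∩ W_c) >= i] holds exactly when [c <= j_(r-i)]; so the incidence
    conditions defining [Sigma_lambda] are exactly the [k]-domination of
    [lambda] by [J]. *)

From mathcomp Require Import all_boot all_order all_algebra.
From mathcomp Require Import complex.
From mathcomp Require Import all_classical all_reals all_analysis.
From mathcomp Require Import zify.
Set Implicit Arguments.
Unset Strict Implicit.
Import GRing.Theory.
Local Open Scope classical_set_scope.

Section FiniteDimension.
Variables (R : realType) (H : completeNormedModType R[i]).
Local Open Scope ring_scope.
Implicit Types (S T V : set H).

Lemma subspace_lcomb S n (c : 'I_n -> R[i]) (v : 'I_n -> H) :
  is_subspace S -> (forall i, S (v i)) -> S (lcomb c v).
Proof.
move=> [S0 [SD SZ]] Sv; rewrite /lcomb; apply: (big_ind S) => // i _; exact: SZ.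
Qed.

Lemma subspaceB S x y : is_subspace S -> S x -> S y -> S (x - y).
Proof.
move=> [S0 [SD SZ]] Sx Sy; rewrite -scaleN1r; apply: SD => //; exact: SZ.
Qed.

Lemma subspaceI S T : is_subspace S -> is_subspace T -> is_subspace (S `&` T).
Proof.
move=> [S0 [SD SZ]] [T0 [TD TZ]]; split; first by [].
split; first by move=> x y [? ?] [? ?]; split; [apply: SD | apply: TD].
by move=> a x [? ?]; split; [apply: SZ | apply: TZ].
Qed.

Lemma subspace0 : is_subspace [set 0 : H].
Proof.
split; first by [].
split; first by move=> x y /= -> ->; rewrite addr0.
by move=> a x /= ->; rewrite scaler0.
Qed.

Lemma lcomb0 n (v : 'I_n -> H) : lcomb (fun _ => 0) v = 0.
Proof. by rewrite /lcomb big1 // => i _; rewrite scale0r. Qed.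

Lemma lcombZ n a (c : 'I_n -> R[i]) (v : 'I_n -> H) :
  lcomb (fun i => a * c i) v = a *: lcomb c v.
Proof. by rewrite /lcomb scaler_sumr; apply: eq_bigr => i _; rewrite scalerA. Qed.

Lemma lcomb_comp n m (c : 'I_n -> R[i]) (d : 'I_n -> 'I_m -> R[i]) (v : 'I_m -> H) :
  lcomb c (fun l => lcomb (d l) v) = lcomb (fun j => \sum_l c l * d l j) v.
Proof.
rewrite /lcomb; under eq_bigr do rewrite scaler_sumr.
rewrite exchange_big; apply: eq_bigr => j _; rewrite scaler_suml.
by apply: eq_bigr => l _; rewrite scalerA.
Qed.

(* Rank-nullity modulo [S]: [K] is a basis of the left kernel of the
   coordinate matrix of [F] against [v]. *)
Lemma mod_span_relations S n m (F : 'I_n -> H) (v : 'I_m -> H) :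
  is_subspace S -> (forall i, exists c, S (F i - lcomb c v)) ->
  exists r (K : 'M[R[i]]_(r, n)),
    [/\ row_free K, (n <= r + m)%N & forall l, S (lcomb (fun i => K l i) F)].
Proof.
move=> hS /choice[cf hcf]; pose M := \matrix_(i < n, j < m) cf i j.
exists (\rank (kermx M)), (row_base (kermx M)); split.
- exact: row_base_free.
- by rewrite mxrank_ker; have := rank_leq_col M; lia.
move=> l; set K := row_base (kermx M).
have KM : K *m M = 0.
  have /submxP [D ->] : (K <= kermx M)%MS by rewrite eq_row_base.
  by rewrite -mulmxA mulmx_ker mulmx0.
clearbody K.
have -> : lcomb (fun i => K l i) F =
    lcomb (fun i => K l i) (fun i => F i - lcomb (cf i) v)
    + \sum_(j < m) (K *m M) l j *: v j.
  rewrite /lcomb.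
  under [X in _ = _ + X]eq_bigr => j _ do rewrite mxE scaler_suml.
  rewrite exchange_big /= -big_split /=; apply: eq_bigr => i _.
  under [X in _ = _ + X]eq_bigr => j _ do rewrite mxE -scalerA.
  by rewrite -scaler_sumr -scalerDr subrK.
rewrite KM; under [X in S (_ + X)]eq_bigr => j _ do rewrite mxE scale0r.
by rewrite big1_eq addr0; apply: subspace_lcomb.
Qed.

Lemma lin_indep_span_leq n m (x : 'I_n -> H) (v : 'I_m -> H) :
  lin_indep x -> (forall i, exists c, x i = lcomb c v) -> (n <= m)%N.
Proof.
move=> hx hv.
have hv0 i : exists c, [set 0 : H] (x i - lcomb c v).
  by have [c ->] := hv i; exists c; rewrite /= subrr.
have [r [K [Kfree hnr hK]]] := mod_span_relations subspace0 hv0.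
have K0 : K = 0 by apply/matrixP => l i; rewrite mxE; exact: hx _ (hK l) i.
by move: Kfree; rewrite /row_free K0 mxrank0 => /eqP r0; lia.
Qed.

Definition extend_family n (b : 'I_n -> H) (x : H) : 'I_(n + 1) -> H :=
  fun i => if fintype.split i is inl j then b j else x.

Lemma lin_indep_extend n (b : 'I_n -> H) x : lin_indep b ->
  ~ (exists c, x = lcomb c b) -> lin_indep (extend_family b x).
Proof.
move=> hb hx c hc.
rewrite /lcomb big_split_ord /= big_ord1 /extend_family (unsplitK (inr _)) in hc.
rewrite (eq_bigr (fun i => c (lshift 1 i) *: b i)) in hc; last first.
  by move=> i _; rewrite (unsplitK (inl _)).
set c0 := c (rshift n ord0) in hc.
have c00 : c0 = 0.
  have [//|nz] := eqVneq c0 0; case: hx.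
  exists (fun i => - c0^-1 * c (lshift 1 i)).
  move: hc; rewrite addrC => /eqP; rewrite addr_eq0 => /eqP hx'.
  by rewrite lcombZ -[x]scale1r -(mulVf nz) -scalerA hx' scalerN -scaleNr.
rewrite c00 scale0r addr0 in hc.
move=> i; rewrite -(splitK i); case: (fintype.split i) => j /=.
  exact: hb _ hc j.
by rewrite (ord1 j).
Qed.

Lemma dim_eq_ge S n : dim_eq S n -> dim_ge S n.
Proof. by move=> [_ [b [bi bS _]]]; exists b. Qed.

Lemma dim_ge_subset S T n : S `<=` T -> dim_ge S n -> dim_ge T n.
Proof. by move=> ST [b [bi bS]]; exists b; split=> // i; apply: ST. Qed.

Lemma dim_ge_leq S T n e : dim_ge S n -> S `<=` T -> dim_eq T e -> (n <= e)%N.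
Proof.
move=> [b [bi bS]] ST [_ [b' [_ _ b'sp]]].
exact: lin_indep_span_leq bi (fun i => b'sp _ (ST _ (bS i))).
Qed.

Lemma dim_eq_uniq S n e : dim_eq S n -> dim_eq S e -> n = e.
Proof.
move=> hn he; apply/eqP; rewrite eqn_leq.
by rewrite (dim_ge_leq (dim_eq_ge hn) (@subset_refl _ _) he)
           (dim_ge_leq (dim_eq_ge he) (@subset_refl _ _) hn).
Qed.

Lemma dim_eq_subset V S m : dim_eq V m -> is_subspace S -> S `<=` V ->
  exists n, dim_eq S n.
Proof.
move=> hV hS SV.
have bound n : dim_ge S n -> (n <= m)%N by move=> hn; apply: dim_ge_leq hn SV hV.
have ge0 : dim_ge S 0 by exists (fun _ => 0); split=> [c _ []|[]].
have [n [hn hn1]] : exists n, dim_ge S n /\ ~ dim_ge S n.+1.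
  apply: contrapT => hmax.
  suff /bound : dim_ge S m.+1 by rewrite ltnn.
  elim: m.+1 => // j IH; apply: contrapT => hj; apply: hmax; by exists j.
have [b [bi bS]] := hn; exists n; split=> //; exists b; split=> // x Sx.
apply: contrapT => nx; apply: hn1; rewrite -addn1.
exists (extend_family b x); split; first exact: lin_indep_extend.
by move=> i; rewrite /extend_family; case: (fintype.split i).
Qed.

Lemma dim_eq_subset_eq S T n : S `<=` T -> dim_eq S n -> dim_eq T n -> T `<=` S.
Proof.
move=> ST [hS [b [bi bS bsp]]] hT x Tx; apply: contrapT => nSx.
have nsp : ~ (exists c, x = lcomb c b).
  by move=> [c hc]; apply: nSx; rewrite hc; apply: subspace_lcomb.
have ext : dim_ge T (n + 1).
  exists (extend_family b x); split; first exact: lin_indep_extend.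
  by move=> i; rewrite /extend_family; case: (fintype.split i) => // j; apply: ST.
by have := dim_ge_leq ext (@subset_refl _ _) hT; rewrite addn1 ltnn.
Qed.

Lemma dim_eq0 S n : dim_eq S n -> S `<=` [set 0] -> n = 0%N.
Proof.
move=> [_ [b [bi bS _]]] S0; case: n b bi bS => // n b bi bS.
have : lcomb (fun _ => 1) b = 0.
  by rewrite /lcomb big1 // => i _; rewrite (S0 _ (bS i)) scaler0.
by move/bi => /(_ ord0) /eqP; rewrite oner_eq0.
Qed.

Lemma dim_cap_codim_leq V W1 W2 a b p e : is_subspace V ->
  codim_eq W1 a -> codim_eq W2 b -> W2 `<=` W1 ->
  dim_eq (V `&` W1) p -> dim_eq (V `&` W2) e -> (p + a <= e + b)%N.
Proof.
move=> hV [hW1 [u [uind _]]] [hW2 [v [_ vsp]]] W21 [_ [B [Bi BVW _]]] hVW2.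
have BV i : V (B i) by case: (BVW i).
have BW1 i : W1 (B i) by case: (BVW i).
pose F : 'I_(p + a) -> H :=
  fun i => match fintype.split i with inl j => B j | inr j => u j end.
have [r [K [Kfree hr hK]]] := mod_span_relations hW2 (fun i => vsp (F i)).
pose y l := lcomb (fun j => K l (lshift a j)) B.
have eF l : lcomb (fun i => K l i) F = y l + lcomb (fun j => K l (rshift p j)) u.
  rewrite /lcomb big_split_ord /=; congr (_ + _); apply: eq_bigr => j _.
    by rewrite /F (unsplitK (inl _)).
  by rewrite /F (unsplitK (inr _)).
have Ku0 l j : K l (rshift p j) = 0.
  apply: (uind (fun j => K l (rshift p j))).
  have -> : lcomb (fun j => K l (rshift p j)) u = lcomb (fun i => K l i) F - y l.
    by rewrite eF addrC addKr.
  exact: subspaceB hW1 (W21 _ (hK l)) (subspace_lcomb _ hW1 BW1).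
have yVW2 l : (V `&` W2) (y l).
  split; first exact: subspace_lcomb.
  have := hK l; rewrite eF.
  by under eq_fun do rewrite Ku0; rewrite lcomb0 addr0.
have yind : lin_indep y.
  move=> c hc; have : \row_l c l *m K = 0 *m K.
    rewrite mul0mx; apply/rowP => i; rewrite !mxE -(splitK i).
    case: (fintype.split i) => j /=.
      rewrite /y lcomb_comp in hc; rewrite -[RHS](Bi _ hc j).
      by apply: eq_bigr => l _; rewrite mxE.
    by rewrite big1 // => l _; rewrite Ku0 mulr0.
  by move/(row_free_inj Kfree)/rowP => h l; have := h l; rewrite !mxE.
have := dim_ge_leq (ex_intro _ y (conj yind yVW2)) (@subset_refl _ _) hVW2.
lia.
Qed.

End FiniteDimension.

Lemma nonincreasing_eventually_const (d : nat -> nat) :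
  {homo d : a b /~ a <= b} -> exists N, forall b, N <= b -> d b = d N.
Proof.
move=> dmon; have attained : exists v, `[< exists a, d a = v >].
  by exists (d 0); apply/asboolP; exists 0.
case: (ex_minnP attained) => _ /asboolP[N <-] dmin; exists N => b Nb.
by apply/eqP; rewrite eqn_leq dmon // dmin //; apply/asboolP; exists b.
Qed.

(* [j q] is the first position after which [d] has dropped [q + 1] times. *)
Lemma unit_step_jumps (d : nat -> nat) : {homo d : a b /~ a <= b} ->
  (forall a, d a <= (d a.+1).+1) -> (exists N, d N = 0) ->
  exists J : seq nat, [/\ sorted ltn J, size J = d 0 &
    forall q, q < d 0 -> d (nth 0 J q) = d 0 - q /\ d (nth 0 J q).+1 = d 0 - q - 1].
Proof.
move=> dmon dstep [N dN]; set m := d 0.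
have drop_ex q : exists a, (d a.+1 < m - q) || (m <= q).
  exists N; have := dmon _ _ (leqnSn N); rewrite dN; lia.
pose j q := ex_minn (drop_ex q).
have jump q : q < m -> d (j q) = m - q /\ d (j q).+1 = m - q - 1.
  move=> qm; rewrite /j; case: ex_minnP => a ha amin.
  have ha' : d a.+1 < m - q by case/orP: ha => //; lia.
  suff : m - q <= d a by have := dstep a; lia.
  case: a ha ha' amin => [|a] _ _ amin; first by rewrite leq_subr.
  rewrite leqNgt; apply/negP => h.
  by have := amin a; rewrite h ltnn => /(_ isT).
exists (mkseq j m); split=> [||q qm]; rewrite ?size_mkseq ?nth_mkseq //; last exact: jump.
apply: (homo_sorted_in (P := fun q => q < m)); last exact: iota_ltn_sorted.
  move=> q q' qm q'm /= qq'; rewrite ltnNge; apply/negP => /dmon.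
  have [-> _] := jump _ qm; have [-> _] := jump _ q'm.
  by move: qm q'm qq'; rewrite /in_mem /=; lia.
by apply/allP => q; rewrite mem_iota.
Qed.

Section FlagTypes.
Variables (R : realType) (H : completeNormedModType R[i]) (W : nat -> set H).
Hypothesis hW : is_flag W.
Implicit Types (V : set H) (J : seq nat).

Lemma flag_subset a b : a <= b -> W b `<=` W a.
Proof.
case: hW => _ _ Wsucc _ /subnK <-; elim: (b - a) => [|c IH] x //.
by rewrite addSn => /Wsucc /IH.
Qed.

Lemma flag_cap_subset V a b : a <= b -> V `&` W b `<=` V `&` W a.
Proof. by move=> ab; apply: setIS; apply: flag_subset. Qed.

Lemma flag_dims_nonincreasing V (d : nat -> nat) :
  (forall a, dim_eq (V `&` W a) (d a)) -> {homo d : a b /~ a <= b}.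
Proof.
move=> hd a b ba.
exact: dim_ge_leq (dim_eq_ge (hd a)) (flag_cap_subset ba) (hd b).
Qed.

Lemma flag_dims_vanish V (d : nat -> nat) :
  (forall a, dim_eq (V `&` W a) (d a)) -> exists N, d N = 0.
Proof.
move=> hd; case: hW => _ _ _ Wcap.
have [N dN] := nonincreasing_eventually_const (flag_dims_nonincreasing hd).
exists N; apply: (dim_eq0 (hd N)) => x [Vx WNx]; rewrite -Wcap => j _.
have [jN | Nj] := leqP j N; first exact: flag_subset jN _ WNx.
have hdj := hd j; rewrite (dN j (ltnW Nj)) in hdj.
by case: (dim_eq_subset_eq (flag_cap_subset (ltnW Nj)) hdj (hd N) (conj Vx WNx)).
Qed.

Lemma exact_type_exists V m : dim_eq V m -> exists J, sorted ltn J /\ exact_type W V J.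
Proof.
move=> hV; case: hW => W0 Wcodim Wsucc _.
have /choice[d hd] a : exists e, dim_eq (V `&` W a) e.
  by apply: dim_eq_subset hV (subspaceI hV.1 (Wcodim a).2.1) _ => x [].
have d0 : d 0 = m by apply: dim_eq_uniq (hd 0) _; rewrite W0 setIT.
have dstep a : d a <= (d a.+1).+1.
  have := dim_cap_codim_leq hV.1 (Wcodim a).2 (Wcodim a.+1).2 (Wsucc a) (hd a) (hd a.+1).
  lia.
have [J [sJ szJ hJ]] :=
  unit_step_jumps (flag_dims_nonincreasing hd) dstep (flag_dims_vanish hd).
rewrite d0 in szJ hJ.
exists J; split=> //; split=> [|q]; rewrite szJ // => /hJ[h1 h2].
by split; [rewrite -h1 | rewrite -h2].
Qed.

Lemma exact_type_uniq V J1 J2 : exact_type W V J1 -> exact_type W V J2 -> J1 = J2.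
Proof.
move=> [hV1 hJ1] [hV2 hJ2]; have sz := dim_eq_uniq hV1 hV2.
apply: (eq_from_nth (x0 := 0)) => // q q1; have q2 : q < size J2 by rewrite -sz.
have [a1 b1] := hJ1 q q1; have [a2 b2] := hJ2 q q2.
have [h|h|//] := ltngtP (nth 0 J1 q) (nth 0 J2 q).
- by have := dim_ge_leq (dim_eq_ge a2) (flag_cap_subset h) b1; lia.
- by have := dim_ge_leq (dim_eq_ge a1) (flag_cap_subset h) b2; lia.
Qed.

Lemma exact_type_dim_ge V J i c : exact_type W V J -> 0 < i <= size J ->
  dim_ge (V `&` W c) i <-> c <= nth 0 J (size J - i).
Proof.
move=> [_ hJ] /andP[i0 iJ]; set j := nth 0 J (size J - i).
have [hj hj1] : dim_eq (V `&` W j) i /\ dim_eq (V `&` W j.+1) i.-1.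
  have qJ : size J - i < size J by lia.
  by have := hJ _ qJ; rewrite subKn // subn1.
split=> [hge | cj]; last exact: dim_ge_subset (flag_cap_subset cj) (dim_eq_ge hj).
rewrite leqNgt; apply/negP => jc.
by have := dim_ge_leq hge (flag_cap_subset jc) hj1; lia.
Qed.

End FlagTypes.

Lemma Fred_dim_ker (R : realType) (H : completeNormedModType R[i]) k (T : H -> H) :
  Fred k%:Z T -> exists2 m, dim_eq (ker T) m & k <= m.
Proof. by move=> [_ [m [n [hm _ _ hk]]]]; exists m => //; lia. Qed.

Theorem lemma4p13 (R : realType) (H : completeNormedModType R[i])
  (hH : sep_inf_hilbert H) (W : nat -> set H) (hW : is_flag W)
  (k : nat) (lam : seq nat) (hsize : size lam = k) (hdec : sorted geq lam) :
  (forall T : H -> H,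
     Sigma W k lam T <-> exists J : seq nat, union_index k lam J /\ SigmaO W k J T) /\
  (forall (J1 J2 : seq nat) (T : H -> H),
     union_index k lam J1 -> union_index k lam J2 ->
     SigmaO W k J1 T -> SigmaO W k J2 T -> J1 = J2).
Proof.
split=> [T|J1 J2 T _ _ [_ hJ1] [_ hJ2]]; last exact: exact_type_uniq hJ1 hJ2.
split=> [[hF hS] | [J [[_ [kJ hJ]] [hF hJT]]]].
- have [m hm km] := Fred_dim_ker hF.
  have [J [sJ hJT]] := exact_type_exists hW hm.
  have szJ : size J = m := dim_eq_uniq hJT.1 hm.
  exists J; split=> //; split=> //; split=> [|i hi]; first by rewrite szJ.
  have hiJ : 0 < i <= size J by lia.
  exact/(exact_type_dim_ge hW _ hJT hiJ)/hS.
- split=> // i hi; have hiJ : 0 < i <= size J by lia.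
  exact/(exact_type_dim_ge hW _ hJT hiJ)/hJ.
Qed.
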